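(* For each $n$ let $r_\star=r_\star(n)$ be an integer maximising $q_n^r$ over $r$. Then: (i) if $r$ is an integer with $r=r_\star+c\sqrt n$ for some $c\in[-\sqrt{\log n},\sqrt{\log n}]$, then \[ q_n^r = \exp\!\left(-\frac{5\sqrt5\,c^2}{2}+o(1)\right) q_n^{r_\star}, \] where $o(1)\to 0$ as $n\to\infty$; (ii) the number of sets $A\in Q(P_n)$ with $\big||A|-r_\star\big|>\sqrt{n\log n}$ is \[ O\!\left(n\exp\!\left(-\frac{5\sqrt5}{2}\log n\right) q_n^{r_\star}\right)=o\big(q_n^{r_\star}\big). \]
   Context: $Q(P_n)$ is the family of subsets of $[n]=\{1,\dots,n\}$ containing no two consecutive integers, $Q^{(r)}(P_n)$ its members of size $r$, and $q_n^r=|Q^{(r)}(P_n)|$. *)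

From mathcomp Require Import all_boot.
From Stdlib Require Import Reals.

Set Implicit Arguments. Unset Strict Implicit. Unset Printing Implicit Defensive.

(* The path P_n on [n] = {1,...,n} is encoded on 'I_n = {0,...,n-1} via
   i |-> i+1; this shift preserves the "two consecutive integers" relation. *)

Definition Qset (n : nat) : {set {set 'I_n}} :=
  [set A : {set 'I_n} | [forall i : 'I_n, forall j : 'I_n,
     ((i \in A) && (j \in A)) ==> (nat_of_ord j != (nat_of_ord i).+1)]].

Definition Qrset (n r : nat) : {set {set 'I_n}} := [set A in Qset n | #|A| == r].
Definition q (n r : nat) : nat := #|Qrset n r|.

Definition far_count (n rs : nat) (t : R) : nat :=
  #|[set A in Qset n | if Rlt_dec t (Rabs (INR #|A| - INR rs)) then true else false]|.

Definition qZ (n : nat) (r : BinNums.Z) : nat :=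
  if BinInt.Z.ltb r BinNums.Z0 then 0%N else q n (BinInt.Z.to_nat r).

From mathcomp Require Import all_boot zify.
From Stdlib Require Import Reals Lra Psatz.

Set Implicit Arguments. Unset Strict Implicit. Unset Printing Implicit Defensive.

(* Splitting on whether the last point is used gives q_{n+2}^{r+1} = q_{n+1}^{r+1} + q_n^r,
   hence q_n^r = C(n+1-r, r) and
     q_n^{j+1} / q_n^j = (n-2j+1)(n-2j) / ((j+1)(n-j+1)).
   Write j = xstar n + d, where xstar = (5 - sqrt 5)/10 solves (1-2x)^2 = x(1-x).  For
   |d| <= n/100 the logarithm of this ratio is -5 sqrt 5 d/n + O(1/n + d^2/n^2), so
   Phi n j = ln q_n^j + 5 sqrt 5 d^2/(2n) moves by O(1/n + d^2/n^2) per step, i.e. by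
   O(M/n + M^3/n^2) across a window of width M around the maximum.  The same ratio
   shows that q_n^j is unimodal with maximiser r* within 1 of xstar n.  Taking
   M = sqrt (n log n) + 3 gives (i); for (ii) each of the n+1 layers farther than
   sqrt (n log n) from r* is bounded, by unimodality, by one of the two layers at
   distance ceil (sqrt (n log n)), where the Gaussian factor is at most
   e n^(-5 sqrt 5/2). *)

Lemma QsetP n (A : {set 'I_n}) :
  reflect (forall i j, i \in A -> j \in A -> val j != (val i).+1) (A \in Qset n).
Proof.
rewrite inE; apply: (iffP forallP) => [H i j Hi Hj | H i].
- by move/forallP/(_ j)/implyP: (H i); apply; rewrite Hi Hj.
- by apply/forallP=> j; apply/implyP=> /andP[Hi Hj]; apply: H.
Qed.

Lemma Qset_subset n (A B : {set 'I_n}) : B \subset A -> A \in Qset n -> B \in Qset n.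
Proof. by move=> /subsetP sBA /QsetP HA; apply/QsetP=> i j /sBA Hi /sBA; apply: HA. Qed.

Lemma in_Qrset n r (A : {set 'I_n}) : (A \in Qrset n r) = (A \in Qset n) && (#|A| == r).
Proof. by rewrite inE. Qed.

Section WidenSet.
Variable n : nat.

Definition widen_set (B : {set 'I_n}) : {set 'I_n.+1} := widen_ord (leqnSn n) @: B.
Definition shrink_set (A : {set 'I_n.+1}) : {set 'I_n} := [set i | widen_ord (leqnSn n) i \in A].

Lemma widen_ordS_inj : injective (widen_ord (leqnSn n)).
Proof. by move=> i j /(congr1 val) /= /val_inj. Qed.

Lemma widen_setK : cancel widen_set shrink_set.
Proof. by move=> B; apply/setP=> i; rewrite inE mem_imset //; apply: widen_ordS_inj. Qed.

Lemma widen_set_inj : injective widen_set.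
Proof. exact: can_inj widen_setK. Qed.

Lemma widen_set_lt (B : {set 'I_n}) i : i \in widen_set B -> val i < n.
Proof. by rewrite /widen_set => /imsetP[b _ ->] /=. Qed.

Lemma ord_max_notin_widen_set (B : {set 'I_n}) : ord_max \notin widen_set B.
Proof. by apply/negP=> /widen_set_lt; rewrite ltnn. Qed.

Lemma shrink_setK (A : {set 'I_n.+1}) : ord_max \notin A -> widen_set (shrink_set A) = A.
Proof.
move=> maxA; apply/setP=> i; apply/imsetP/idP => [[b] | Ai].
  by rewrite inE => Ab ->.
have lt_in : val i < n.
  rewrite ltn_neqAle -ltnS ltn_ord andbT; apply/negP=> /eqP iE.
  have iE' : i = ord_max by apply/val_inj.
  by rewrite -iE' Ai in maxA.
have iw : i = widen_ord (leqnSn n) (Ordinal lt_in) by apply: val_inj.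
by exists (Ordinal lt_in); rewrite // inE -iw.
Qed.

Lemma card_widen_set (B : {set 'I_n}) : #|widen_set B| = #|B|.
Proof. by rewrite card_imset //; apply: widen_ordS_inj. Qed.

Lemma widen_set_Qset (B : {set 'I_n}) : (widen_set B \in Qset n.+1) = (B \in Qset n).
Proof.
rewrite /widen_set; apply/QsetP/QsetP => [H i j Bi Bj | H i j].
  by apply: (H (widen_ord _ i) (widen_ord _ j)); apply: imset_f.
by case/imsetP=> a Ba -> /imsetP[b Bb ->]; apply: H.
Qed.

End WidenSet.

Definition add_max n (B : {set 'I_n}) : {set 'I_n.+2} := ord_max |: widen_set (widen_set B).
Definition drop_max n (A : {set 'I_n.+2}) : {set 'I_n} := shrink_set (shrink_set (A :\ ord_max)).

Lemma add_maxK n : cancel (@add_max n) (@drop_max n).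
Proof. by move=> B; rewrite /drop_max /add_max setU1K ?ord_max_notin_widen_set // !widen_setK. Qed.

Lemma Qrset_notin_max n r :
  [set A in Qrset n.+1 r | ord_max \notin A] = @widen_set n @: Qrset n r.
Proof.
apply/setP=> A; rewrite inE; apply/idP/imsetP => [/andP[] | [B]].
  rewrite in_Qrset => /andP[QA /eqP cA] maxA.
  exists (shrink_set A); last by rewrite shrink_setK.
  by rewrite in_Qrset -widen_set_Qset -card_widen_set shrink_setK // QA cA eqxx.
rewrite in_Qrset => /andP[QB cB] ->.
by rewrite ord_max_notin_widen_set in_Qrset widen_set_Qset card_widen_set QB cB.
Qed.

Lemma add_max_Qset n (B : {set 'I_n}) : B \in Qset n -> add_max B \in Qset n.+2.
Proof.
move=> QB; have /QsetP QB2 : widen_set (widen_set B) \in Qset n.+2 by rewrite !widen_set_Qset.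
apply/QsetP=> i j; rewrite !in_setU1.
case/orP=> [/eqP -> | Bi]; case/orP=> [/eqP -> | Bj] /=.
- by rewrite neq_ltn ltnSn.
- by rewrite neq_ltn ltn_ord.
- case/imsetP: Bi => b /widen_set_lt ltb -> /=.
  by rewrite eqSS neq_ltn ltb orbT.
- exact: QB2.
Qed.

Lemma Qrset_in_max n r :
  [set A in Qrset n.+2 r.+1 | ord_max \in A] = @add_max n @: Qrset n r.
Proof.
apply/setP=> A; rewrite inE; apply/idP/imsetP => [/andP[] | [B]]; last first.
  rewrite in_Qrset => /andP[QB /eqP cB] ->.
  by rewrite setU11 andbT in_Qrset add_max_Qset // cardsU1 ord_max_notin_widen_set
    !card_widen_set cB add1n eqxx.
rewrite in_Qrset => /andP[QA /eqP cA] maxA.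
have max1 : ord_max \notin A :\ ord_max by rewrite setD11.
have max2 : (ord_max : 'I_n.+1) \notin shrink_set (A :\ ord_max).
  apply/negP; rewrite !inE => /andP[_ Am].
  by move/QsetP: QA => /(_ _ _ Am maxA); rewrite /= eqxx.
exists (drop_max A); last by rewrite /add_max /drop_max !shrink_setK // setD1K.
rewrite /drop_max in_Qrset -widen_set_Qset -card_widen_set shrink_setK //.
rewrite -widen_set_Qset -card_widen_set shrink_setK //.
rewrite (Qset_subset (subD1set A ord_max) QA).
by move: cA; rewrite (cardsD1 ord_max A) maxA add1n => -[->]; rewrite eqxx.
Qed.

Lemma q_SS n r : q n.+2 r.+1 = q n.+1 r.+1 + q n r.
Proof.
rewrite /q -(cardsID [set A : {set 'I_n.+2} | ord_max \in A]) addnC.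
have setIE (m k : nat) (P : pred {set 'I_m}) :
    Qrset m k :&: [set A | P A] = [set A in Qrset m k | P A].
  by apply/setP=> A; rewrite !inE.
have setDE (m k : nat) (P : pred {set 'I_m}) :
    Qrset m k :\: [set A | P A] = [set A in Qrset m k | ~~ P A].
  by apply/setP=> A; rewrite !inE andbC.
rewrite setIE setDE Qrset_notin_max Qrset_in_max !card_imset //.
  exact: can_inj (@add_maxK n).
exact: widen_set_inj.
Qed.

Lemma q_n0 n : q n 0 = 1.
Proof.
rewrite /q (_ : Qrset n 0 = [set set0]) ?cards1 //.
apply/setP=> A; rewrite in_Qrset in_set1 cards_eq0 andb_idl // => /eqP ->.
by apply/QsetP=> i j; rewrite inE.
Qed.

Lemma q_le1 n r : n <= 1 -> q n r = 'C(n, r).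
Proof.
move=> n_le1; rewrite /q (_ : Qrset n r = [set A : {set 'I_n} | #|A| == r]).
  by rewrite card_draws card_ord.
apply/setP=> A; rewrite in_Qrset [in RHS]inE andb_idl // => _.
by apply/QsetP=> i j _ _; rewrite neq_ltn (leq_trans (ltn_ord j)) // (leq_trans n_le1).
Qed.

Lemma q_binomial n r : q n r = 'C(n.+1 - r, r).
Proof.
elim/ltn_ind: n r => -[|[|n]] IH r; try by rewrite q_le1 //; case: r => [|[|r]].
case: r => [|r]; first by rewrite q_n0 bin0.
rewrite q_SS !IH //; case: (leqP r n.+1) => [le_rn | lt_nr].
  by rewrite !subSS (subSn le_rn) binS.
by rewrite !subSS !bin_small //; lia.
Qed.

Lemma q_gt0 n j : 2 * j <= n.+1 -> 0 < q n j.
Proof. by move=> ?; rewrite q_binomial bin_gt0; lia. Qed.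

Lemma q_eq0 n j : n.+1 < 2 * j -> q n j = 0.
Proof. by move=> ?; rewrite q_binomial bin_small //; lia. Qed.

Lemma q_succ_ratio n j : 2 * j <= n ->
  q n j.+1 * (j.+1 * (n - j).+1) = q n j * ((n - 2 * j).+1 * (n - 2 * j)).
Proof.
move=> le2jn; rewrite !q_binomial subSS (subSn (_ : j <= n)); last by lia.
have -> : n - 2 * j = n - j - j by lia.
have le_jm : j <= n - j by lia.
move: (n - j) le_jm => m le_jm.
have E1 := mul_bin_left m j.
have E2 := mul_bin_down m.+1 j; rewrite /= subSn // in E2.
rewrite mulnA [_ * j.+1]mulnC E1 -mulnA [_ * m.+1]mulnC E2.
by rewrite mulnCA [RHS]mulnC -mulnA.
Qed.

Lemma card_bigcup_le (T I : finType) (P : pred I) (F : I -> {set T}) :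
  #|\bigcup_(i | P i) F i| <= \sum_(i | P i) #|F i|.
Proof.
apply: (big_ind2 (fun (A : {set T}) m => #|A| <= m)) => [|A m B k leA leB|//].
  by rewrite cards0.
exact: leq_trans (leq_card_setU A B) (leq_add leA leB).
Qed.

Lemma card_Qset_sizes_le n (P : pred nat) Qm :
  (forall r, r <= n -> P r -> q n r <= Qm) -> #|[set A in Qset n | P #|A|]| <= n.+1 * Qm.
Proof.
move=> q_le; have sub : [set A in Qset n | P #|A|] \subset \bigcup_(i < n.+1 | P i) Qrset n i.
  apply/subsetP=> A; rewrite inE => /andP[QA PA].
  have lt_An : #|A| < n.+1 by rewrite ltnS -[X in _ <= X]card_ord max_card.
  by apply/bigcupP; exists (Ordinal lt_An); rewrite ?in_Qrset ?QA /=.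
apply: leq_trans (subset_leq_card sub) _; apply: leq_trans (card_bigcup_le _ _) _.
apply: leq_trans (_ : \sum_(i < n.+1 | P i) Qm <= _).
  by apply: leq_sum => i Pi; apply: (q_le i _ Pi); rewrite -ltnS ltn_ord.
rewrite big_mkcond -[X in _ <= X * _]card_ord -sum_nat_const.
by apply: leq_sum => i _; case: ifP.
Qed.

Local Open Scope R_scope.

Lemma Rabs_le_inv a b : Rabs a <= b -> - b <= a <= b.
Proof. by move=> H; have := Rle_abs a; have := Rle_abs (- a); rewrite Rabs_Ropp; lra. Qed.

Lemma exp_le_exp x y : x <= y -> exp x <= exp y.
Proof. by case/Rle_lt_or_eq_dec=> [/exp_increasing /Rlt_le | ->]; last exact: Rle_refl. Qed.

Lemma ln_le_sub1 x : 0 < x -> ln x <= x - 1.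
Proof. by move=> x_gt0; have := exp_ineq1_le (ln x); rewrite exp_ln //; lra. Qed.

Lemma ln_ge0 x : 1 <= x -> 0 <= ln x.
Proof.
case/Rle_lt_or_eq_dec=> [x_gt1 | <-]; last by rewrite ln_1; apply: Rle_refl.
by rewrite -ln_1; apply/Rlt_le/ln_increasing; lra.
Qed.

Lemma le_mul_exp_of_ln a b X : 0 < a -> 0 < b -> ln a <= ln b + X -> a <= b * exp X.
Proof. by move=> a_gt0 b_gt0 /exp_le_exp; rewrite exp_plus !exp_ln. Qed.

Lemma ln1p_approx u : Rabs u <= 1 / 2 -> Rabs (ln (1 + u) - u) <= 2 * u ^ 2.
Proof.
move=> /Rabs_le_inv [u_ge u_le].
have up_gt0 : 0 < 1 + u by lra.
have inv_gt0 : 0 < / (1 + u) by apply: Rinv_0_lt_compat.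
have upper := ln_le_sub1 up_gt0.
(* the lower bound is [ln x <= x - 1] applied at [1 / (1 + u)] *)
have lower : u / (1 + u) <= ln (1 + u).
  have := ln_le_sub1 inv_gt0; rewrite ln_Rinv //.
  have -> : / (1 + u) - 1 = - (u / (1 + u)) by field; lra.
  lra.
have : 0 <= u ^ 2 * (1 + 2 * u) / (1 + u).
  apply: Rmult_le_pos; last exact: Rlt_le.
  by apply: Rmult_le_pos; [apply: pow2_ge_0 | lra].
have -> : u ^ 2 * (1 + 2 * u) / (1 + u) = u / (1 + u) - (u - 2 * u ^ 2) by field; lra.
by move=> ?; apply: Rabs_le; have := pow2_ge_0 u; lra.
Qed.

Definition sqrt5 := sqrt 5.

(* At [j = xstar n] the ratio [rnum n j / rden n j] of consecutive values of [q] tends to 1. *)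
Definition xstar := (5 - sqrt5) / 10.
Definition kappa := 5 * sqrt5.

Definition rnum (n j : R) := (n - 2 * j + 1) * (n - 2 * j).
Definition rden (n j : R) := (j + 1) * (n - j + 1).

Lemma sqrt5_sq : sqrt5 * sqrt5 = 5.
Proof. by rewrite /sqrt5 sqrt_sqrt //; lra. Qed.

Lemma sqrt5_bounds : 2.2 <= sqrt5 <= 2.3.
Proof.
have sqrt5_ge0 : 0 <= sqrt5 by apply: sqrt_pos.
by have := sqrt5_sq; split; nra.
Qed.

Lemma xstar_bounds : 0.27 <= xstar <= 0.28.
Proof. by have := sqrt5_bounds; rewrite /xstar; lra. Qed.

Lemma kappa_bounds : 11 <= kappa <= 11.5.
Proof. by have := sqrt5_bounds; rewrite /kappa; lra. Qed.

Lemma rden_dev n d :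
  rden n (n * xstar + d) = n ^ 2 / 5 + sqrt5 * n * d / 5 + n + 1 - d ^ 2.
Proof.
have E : rden n (n * xstar + d) - (n ^ 2 / 5 + sqrt5 * n * d / 5 + n + 1 - d ^ 2)
  = n ^ 2 * (5 - sqrt5 * sqrt5) / 100 by rewrite /rden /xstar; field.
by rewrite sqrt5_sq in E; lra.
Qed.

Lemma rnum_sub_rden n d : rnum n (n * xstar + d) - rden n (n * xstar + d) =
  - sqrt5 * n * d + 5 * d ^ 2 + n * sqrt5 / 5 - n - 2 * d - 1.
Proof.
have E : rnum n (n * xstar + d) - rden n (n * xstar + d)
  - (- sqrt5 * n * d + 5 * d ^ 2 + n * sqrt5 / 5 - n - 2 * d - 1)
  = n ^ 2 * (sqrt5 * sqrt5 - 5) / 20 by rewrite /rnum /rden /xstar; field.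
by rewrite sqrt5_sq in E; lra.
Qed.

Lemma div_le_of_le_mul a b c : 0 < b -> a <= c * b -> a / b <= c.
Proof.
move=> b_gt0 le_ab; apply: (Rmult_le_reg_r b) => //.
by rewrite /Rdiv Rmult_assoc Rinv_l; lra.
Qed.

Lemma le_mul_of_div_le a b c : 0 < b -> a / b <= c -> a <= c * b.
Proof.
move=> b_gt0 le_ab; rewrite (_ : a = a / b * b); last by field; lra.
by apply: Rmult_le_compat_r; lra.
Qed.

Lemma Rabs_div_le a b c : 0 < b -> Rabs a <= c * b -> Rabs (a / b) <= c.
Proof.
move=> b_gt0 le_ab; rewrite /Rdiv Rabs_mult Rabs_inv (Rabs_pos_eq b); last lra.
exact: div_le_of_le_mul.
Qed.

Lemma err_ge0 n d : 0 < n -> 0 <= 1 / n + d ^ 2 / n ^ 2.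
Proof.
move=> n_gt0; apply: Rplus_le_le_0_compat; first by apply/Rlt_le/Rdiv_lt_0_compat; lra.
by apply: Rmult_le_pos; [apply: pow2_ge_0 | apply/Rlt_le/Rinv_0_lt_compat/pow_lt].
Qed.

Lemma ratio_linear_approx n d : 10000 <= n -> Rabs d <= n / 100 ->
  Rabs (rnum n (n * xstar + d) / rden n (n * xstar + d) - 1 + kappa * d / n)
    <= 110 * (1 / n + d ^ 2 / n ^ 2).
Proof.
move=> n_large d_small; have s5 := sqrt5_bounds; have s5sq := sqrt5_sq.
have n_gt0 : 0 < n by lra.
have [d_ge d_le] := Rabs_le_inv d_small.
have absd_ge0 := Rabs_pos d.
have d2E : d ^ 2 = Rabs d ^ 2 by rewrite RPow_abs Rabs_pos_eq //; apply: pow2_ge_0.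
have nd_bounds : - (n * Rabs d) <= n * d <= n * Rabs d.
  by move: (Rle_abs d) (Rle_abs (- d)); rewrite Rabs_Ropp; split; nra.
have d3_bounds : - (Rabs d * d ^ 2) <= d ^ 3 <= Rabs d * d ^ 2.
  have d2_ge0 := pow2_ge_0 d.
  by move: (Rle_abs d) (Rle_abs (- d)); rewrite Rabs_Ropp; split; nra.
set D := rden n (n * xstar + d).
set N := rnum n (n * xstar + d).
have DE := rden_dev n d; have NDE := rnum_sub_rden n d; rewrite -/D -/N in DE NDE.
have D_ge : n ^ 2 / 10 <= D by nra.
(* the numerator of the error term, after multiplying by [n * D] *)
set E := (N - D) * n + kappa * d * D.
have EE : E = 10 * n * d ^ 2 + n ^ 2 * (sqrt5 / 5 - 1) - 2 * n * d - n
              + 5 * sqrt5 * n * d + 5 * sqrt5 * d - 5 * sqrt5 * d ^ 3.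
  have E1 : E - (10 * n * d ^ 2 + n ^ 2 * (sqrt5 / 5 - 1) - 2 * n * d - n
              + 5 * sqrt5 * n * d + 5 * sqrt5 * d - 5 * sqrt5 * d ^ 3)
     = (sqrt5 * sqrt5 - 5) * n * d ^ 2 by rewrite /E NDE DE /kappa; field.
  by rewrite s5sq in E1; lra.
have E_bound : Rabs E <= 11 * (n ^ 2 + n * d ^ 2).
  have d2_le : d ^ 2 <= n ^ 2 / 10000 by nra.
  have : - (2.3 * (n * d ^ 2 / 100)) <= sqrt5 * d ^ 3 <= 2.3 * (n * d ^ 2 / 100) by split; nra.
  have : - (2.3 * (n / 100)) <= sqrt5 * d <= 2.3 * (n / 100) by split; nra.
  have : - (2.3 * (n * Rabs d)) <= sqrt5 * n * d <= 2.3 * (n * Rabs d) by split; nra.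
  have : 2.2 * n ^ 2 <= sqrt5 * n ^ 2 <= 2.3 * n ^ 2 by split; nra.
  have : 0 <= n * d ^ 2 by have := pow2_ge_0 d; nra.
  by move=> *; apply: Rabs_le; rewrite EE; nra.
have D_gt0 : 0 < D by nra.
have -> : N / D - 1 + kappa * d / n = E / (n * D) by rewrite /E; field; split; lra.
apply: Rabs_div_le; first nra.
have E2 : 110 * (1 / n + d ^ 2 / n ^ 2) * (n * (n ^ 2 / 10)) = 11 * (n ^ 2 + n * d ^ 2).
  by field; lra.
have : 0 <= 110 * (1 / n + d ^ 2 / n ^ 2) * n * (D - n ^ 2 / 10).
  by apply: Rmult_le_pos; [apply: Rmult_le_pos; [have := err_ge0 d n_gt0 |] |]; lra.
by nra.
Qed.

Lemma log_ratio_approx n d : 10000 <= n -> Rabs d <= n / 100 ->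
  Rabs (ln (rnum n (n * xstar + d) / rden n (n * xstar + d)) + kappa * d / n)
    <= 1000 * (1 / n + d ^ 2 / n ^ 2).
Proof.
move=> n_large d_small; have s5 := sqrt5_bounds.
have [d_ge d_le] := Rabs_le_inv d_small.
have lin := Rabs_le_inv (ratio_linear_approx n_large d_small).
set u := _ / _ - 1 in lin; set v := - (kappa * d / n).
set X := 1 / n + d ^ 2 / n ^ 2 in lin *.
have X_ge0 : 0 <= X by apply: err_ge0; lra.
have X_small : X <= 0.0002.
  have -> : X = (n + d ^ 2) / n ^ 2 by rewrite /X; field; lra.
  by apply: div_le_of_le_mul; [apply: pow_lt; lra | nra].
have d2X : d ^ 2 / n ^ 2 <= X.
  have : 0 <= 1 / n by apply/Rlt_le/Rdiv_lt_0_compat; lra.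
  by rewrite /X; lra.
have v_bounds : - 0.115 <= v <= 0.115.
  have -> : v = - (5 * sqrt5 * (d / n)) by rewrite /v /kappa; field; lra.
  have /Rabs_le_inv : Rabs (d / n) <= 1 / 100 by apply: Rabs_div_le; lra.
  by split; nra.
have v2E : v ^ 2 = 125 * (d ^ 2 / n ^ 2).
  have -> : v ^ 2 = 25 * (sqrt5 * sqrt5) * (d ^ 2 / n ^ 2) by rewrite /v /kappa; field; lra.
  by rewrite sqrt5_sq; ring.
have u_small : Rabs u <= 1 / 2 by apply: Rabs_le; rewrite /v in v_bounds; lra.
have u2_le : u ^ 2 <= 255 * X by rewrite /v in v_bounds v2E; nra.
have := ln1p_approx u_small; rewrite (_ : 1 + u = rnum n (n * xstar + d) / rden n (n * xstar + d)).
  by move=> /Rabs_le_inv ?; apply: Rabs_le; lra.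
by rewrite /u; ring.
Qed.

Lemma rden_lt_rnum n d : 1 <= n -> 0 <= n * xstar + d -> d <= -1 ->
  rden n (n * xstar + d) < rnum n (n * xstar + d).
Proof.
move=> n_ge1 j_ge0 d_le; have := rnum_sub_rden n d; have s5 := sqrt5_bounds.
have : 0 <= sqrt5 * n * (- d - 1) by apply: Rmult_le_pos; nra.
have : 0 <= (- d - 1) * (- d) by apply: Rmult_le_pos; lra.
by nra.
Qed.

Lemma rnum_lt_rden n d : 1 <= n -> 0 <= d -> 2 * (n * xstar + d) <= n ->
  rnum n (n * xstar + d) < rden n (n * xstar + d).
Proof.
move=> n_ge1 d_ge0 j_le; have := rnum_sub_rden n d; have s5 := sqrt5_bounds.
have : 2 * d <= n * sqrt5 / 5 by move: j_le; rewrite /xstar; lra.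
move=> d_le; have : 0 <= d * (sqrt5 * n - 5 * d) by apply: Rmult_le_pos; lra.
by nra.
Qed.

Definition dev n j := INR j - INR n * xstar.

Lemma INR_dev n j : INR j = INR n * xstar + dev n j.
Proof. by rewrite /dev; ring. Qed.

Lemma q_succ_ratioR n j : (2 * j <= n)%nat ->
  INR (q n j.+1) * rden (INR n) (INR j) = INR (q n j) * rnum (INR n) (INR j).
Proof.
move=> le2jn; have := f_equal INR (q_succ_ratio le2jn).
rewrite !mult_INR !S_INR !minus_INR ?mult_INR /rnum /rden /=; try (apply/leP; lia).
by move=> ->; ring.
Qed.

Lemma INR_leq m n : (m <= n)%nat -> INR m <= INR n.
Proof. by move/leP; apply: le_INR. Qed.

Lemma leq_double_INR m n : 2 * INR m <= INR n -> (2 * m <= n)%nat.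
Proof. by move=> le_mn; apply/leP/INR_le; rewrite mult_INR /=; lra. Qed.

Lemma INR_ge1 m : (0 < m)%nat -> 1 <= INR m.
Proof. by move=> m_gt0; apply: (le_INR 1); apply/leP. Qed.

Lemma q_lt_succ n j : 1 <= INR n -> dev n j <= -1 -> (0 < q n j)%nat ->
  (q n j < q n j.+1)%nat.
Proof.
move=> n_ge1 d_le /INR_ge1 q_ge1; have xb := xstar_bounds; have j_ge0 := pos_INR j.
have le2jn : (2 * j <= n)%nat by apply: leq_double_INR; rewrite /dev in d_le; nra.
have jR_ge0 : 0 <= INR n * xstar + dev n j by rewrite -INR_dev.
have := rden_lt_rnum n_ge1 jR_ge0 d_le; rewrite -INR_dev => lt_dn.
have : 0 < rden (INR n) (INR j) by rewrite /rden /dev in d_le *; nra.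
by have := q_succ_ratioR le2jn => *; apply/ltP/INR_lt; nra.
Qed.

Lemma q_succ_lt n j : 1 <= INR n -> 0 <= dev n j -> (0 < q n j.+1)%nat ->
  (q n j.+1 < q n j)%nat.
Proof.
move=> n_ge1 d_ge q1_gt0; have j_ge0 := pos_INR j.
case: (leqP (2 * j) n) => [le2jn | lt_n2j]; last by rewrite q_eq0 in q1_gt0; lia.
have le2jnR := INR_leq le2jn; rewrite mult_INR /= in le2jnR.
have j_le : 2 * (INR n * xstar + dev n j) <= INR n by rewrite -INR_dev.
have := rnum_lt_rden n_ge1 d_ge j_le; rewrite -INR_dev => lt_nd.
have q1_ge1 := INR_ge1 q1_gt0; have q_ge0 := pos_INR (q n j).
have : 0 <= rnum (INR n) (INR j) by rewrite /rnum; nra.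
by have := q_succ_ratioR le2jn => *; apply/ltP/INR_lt; nra.
Qed.

Lemma dev_sub n i j : dev n j - dev n i = INR j - INR i.
Proof. by rewrite /dev; ring. Qed.

Lemma dev_succ n j : dev n j.+1 = dev n j + 1.
Proof. by rewrite /dev S_INR; ring. Qed.

Definition Phi n j := ln (INR (q n j)) + kappa * dev n j ^ 2 / (2 * INR n).

Definition drift n M := kappa / (2 * INR n) + 1000 * (1 / INR n + M ^ 2 / INR n ^ 2).

Lemma Phi_succ_approx n j : 10000 <= INR n -> Rabs (dev n j) <= INR n / 100 ->
  Rabs (Phi n j.+1 - Phi n j) <= drift n (dev n j).
Proof.
move=> n_large d_small; have xb := xstar_bounds; have kb := kappa_bounds.
have [d_ge d_le] := Rabs_le_inv d_small; have j_ge0 := pos_INR j.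
have le2jn : (2 * j.+1 <= n)%nat by apply: leq_double_INR; rewrite S_INR /dev in d_le *; nra.
have [q_pos q1_pos] : (0 < q n j)%nat /\ (0 < q n j.+1)%nat by split; apply: q_gt0; lia.
have approx := log_ratio_approx n_large d_small; rewrite -INR_dev in approx.
have ratio := @q_succ_ratioR n j ltac:(lia).
set N := rnum (INR n) (INR j) in approx ratio; set D := rden (INR n) (INR j) in approx ratio.
have D_gt0 : 0 < D by rewrite /D /rden /dev in d_le *; nra.
have qR_gt0 : 0 < INR (q n j) by apply/lt_0_INR/ltP.
have q1E : INR (q n j.+1) = INR (q n j) * (N / D).
  by apply: (Rmult_eq_reg_r D); [rewrite ratio; field|]; lra.
have ND_gt0 : 0 < N / D.
  by apply: (Rmult_lt_reg_l (INR (q n j))) => //; rewrite Rmult_0_r -q1E; apply/lt_0_INR/ltP.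
have -> : Phi n j.+1 - Phi n j = (ln (N / D) + kappa * dev n j / INR n) + kappa / (2 * INR n).
  by rewrite /Phi q1E ln_mult // dev_succ; field; lra.
apply: Rle_trans (Rabs_triang _ _) _.
rewrite (Rabs_pos_eq (kappa / _)); last by apply/Rlt_le/Rdiv_lt_0_compat; lra.
by rewrite /drift; lra.
Qed.

Lemma drift_ge0 n M : 0 < INR n -> 0 <= drift n M.
Proof.
move=> n_gt0; have kb := kappa_bounds; have := err_ge0 M n_gt0.
have : 0 < kappa / (2 * INR n) by apply: Rdiv_lt_0_compat; lra.
by rewrite /drift; lra.
Qed.

Lemma drift_le n d M : 0 < INR n -> Rabs d <= M -> drift n d <= drift n M.
Proof.
move=> n_gt0 le_dM; rewrite /drift.
have := pow_maj_Rabs _ _ 2 le_dM; have : 0 < / INR n ^ 2 by apply/Rinv_0_lt_compat/pow_lt.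
by rewrite /Rdiv; nra.
Qed.

Lemma Phi_lipschitz n a k M : 10000 <= INR n -> M <= INR n / 100 ->
  (forall i, (i < k)%nat -> Rabs (dev n (a + i)) <= M) ->
  Rabs (Phi n (a + k) - Phi n a) <= INR k * drift n M.
Proof.
move=> n_large M_small; elim: k => [|k IH] dev_le.
  by rewrite addn0 Rminus_diag Rabs_R0 /=; lra.
have dev_k := dev_le k (ltnSn k).
have := IH (fun i lt_ik => dev_le i (ltnW lt_ik)).
have := Phi_succ_approx n_large (Rle_trans _ _ _ dev_k M_small).
have := drift_le (ltac:(lra) : 0 < INR n) dev_k.
rewrite addnS S_INR => *.
have -> : Phi n (a + k).+1 - Phi n a =
          (Phi n (a + k).+1 - Phi n (a + k)) + (Phi n (a + k) - Phi n a) by ring.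
by apply: Rle_trans (Rabs_triang _ _) _; lra.
Qed.

Section Maximiser.

Variables (n rs : nat).
Hypothesis n_ge1 : 1 <= INR n.
Hypothesis rs_max : forall r, (q n r <= q n rs)%nat.

Lemma q_max_gt0 : (0 < q n rs)%nat.
Proof. by apply: leq_trans (rs_max 0); rewrite q_n0. Qed.

Lemma dev_max_lt1 : Rabs (dev n rs) < 1.
Proof.
have xb := xstar_bounds.
apply: Rabs_def1; apply: Rnot_le_lt => dev_le.
- case: rs rs_max q_max_gt0 dev_le => [|j] j_max q_gt0 dev_le.
    by rewrite /dev /= in dev_le; nra.
  have dev_ge : 0 <= dev n j by rewrite dev_succ in dev_le; lra.
  by have := q_succ_lt n_ge1 dev_ge q_gt0; have := j_max j; lia.
- by have := q_lt_succ n_ge1 dev_le q_max_gt0; have := rs_max rs.+1; lia.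
Qed.

Lemma q_succ_le_after j : (rs <= j)%nat -> (q n j.+1 <= q n j)%nat.
Proof.
rewrite leq_eqVlt => /orP[/eqP <- // | lt_rs_j].
have [-> // | q1_gt0] := posnP (q n j.+1).
apply/ltnW/q_succ_lt => //; have := dev_sub n rs j.
have := Rabs_le_inv (Rlt_le _ _ dev_max_lt1); have := INR_leq lt_rs_j.
by rewrite S_INR; lra.
Qed.

Lemma q_le_succ_before j : (j < rs)%nat -> (q n j <= q n j.+1)%nat.
Proof.
rewrite leq_eqVlt => /orP[/eqP -> // | lt_j1_rs].
have [-> // | q_gt0] := posnP (q n j).
apply/ltnW/q_lt_succ => //; have := dev_sub n j rs.
have := Rabs_le_inv (Rlt_le _ _ dev_max_lt1); have := INR_leq lt_j1_rs.
by rewrite !S_INR; lra.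
Qed.

Lemma q_le_after a b : (rs <= a)%nat -> (a <= b)%nat -> (q n b <= q n a)%nat.
Proof.
move=> le_rs_a; elim: b => [|b IH]; first by rewrite leqn0 => /eqP ->.
rewrite leq_eqVlt => /orP[/eqP -> // | le_ab].
exact: leq_trans (q_succ_le_after (leq_trans le_rs_a le_ab)) (IH le_ab).
Qed.

Lemma q_le_before a b : (a <= b)%nat -> (b <= rs)%nat -> (q n a <= q n b)%nat.
Proof.
move=> le_ab; elim: b le_ab => [|b IH]; first by rewrite leqn0 => /eqP ->.
rewrite leq_eqVlt => /orP[/eqP -> // | le_ab] lt_b_rs.
exact: leq_trans (IH le_ab (ltnW lt_b_rs)) (q_le_succ_before lt_b_rs).
Qed.

Lemma dev_near_max j : Rabs (dev n j) <= 1 + Rabs (INR j - INR rs).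
Proof.
have -> : dev n j = dev n rs + (INR j - INR rs) by rewrite -(dev_sub n rs j); ring.
by apply: Rle_trans (Rabs_triang _ _) _; have := dev_max_lt1; lra.
Qed.

Lemma Phi_near_max rn M : 10000 <= INR n -> M <= INR n / 100 ->
  1 + Rabs (INR rn - INR rs) <= M ->
  Rabs (Phi n rn - Phi n rs) <= Rabs (INR rn - INR rs) * drift n M.
Proof.
move=> n_large M_small near.
have dev_le j : Rabs (INR j - INR rs) <= Rabs (INR rn - INR rs) -> Rabs (dev n j) <= M.
  by move=> ?; have := dev_near_max j; lra.
case: (leqP rs rn) => [le_rs_rn | /ltnW le_rn_rs].
- have := @Phi_lipschitz n rs (rn - rs) M n_large M_small.
  rewrite subnKC // minus_INR; last exact/leP.
  rewrite [Rabs (INR rn - _)]Rabs_pos_eq; last by have := INR_leq le_rs_rn; lra.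
  apply=> i /ltP /lt_INR lt_i; apply: dev_le.
  rewrite minus_INR in lt_i; last exact/leP.
  by rewrite plus_INR !Rabs_pos_eq; have := pos_INR i; lra.
- have := @Phi_lipschitz n rn (rs - rn) M n_large M_small.
  rewrite subnKC // minus_INR; last exact/leP.
  rewrite -Rabs_Ropp Ropp_minus_distr (Rabs_minus_sym (INR rn)).
  rewrite [Rabs (INR rs - _)]Rabs_pos_eq; last by have := INR_leq le_rn_rs; lra.
  apply=> i /ltP /lt_INR lt_i; apply: dev_le.
  rewrite minus_INR in lt_i; last exact/leP.
  rewrite plus_INR Rabs_minus_sym (Rabs_minus_sym (INR rn)) !Rabs_pos_eq; have := pos_INR i; lra.
Qed.

Lemma q_gt0_near_max rn : 10000 <= INR n -> Rabs (INR rn - INR rs) <= INR n / 100 ->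
  (0 < q n rn)%nat.
Proof.
move=> n_large near; have xb := xstar_bounds.
have [_ dev_le] := Rabs_le_inv (dev_near_max rn).
have le2rn : (2 * rn <= n)%nat by apply: leq_double_INR; rewrite /dev in dev_le; nra.
by apply: q_gt0; lia.
Qed.

Lemma log_q_near_max rn M : 10000 <= INR n -> M <= INR n / 100 ->
  1 + Rabs (INR rn - INR rs) <= M ->
  Rabs (ln (INR (q n rn)) - ln (INR (q n rs)) + kappa * (INR rn - INR rs) ^ 2 / (2 * INR n))
    <= 1020 * (M / INR n) + 1000 * (M ^ 3 / INR n ^ 2).
Proof.
move=> n_large M_small near; have kb := kappa_bounds; have n_gt0 : 0 < INR n by lra.
have Phi_near := Phi_near_max n_large M_small near.
set k := INR rn - INR rs in near Phi_near *.
(* [dev n rn ^ 2 - dev n rs ^ 2 = k ^ 2 + 2 k dev n rs] *)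
have -> : ln (INR (q n rn)) - ln (INR (q n rs)) + kappa * k ^ 2 / (2 * INR n)
    = (Phi n rn - Phi n rs) - kappa * k * dev n rs / INR n.
  have : dev n rn = dev n rs + k by rewrite /k -(dev_sub n rs rn); ring.
  by rewrite /Phi => ->; field; lra.
have cross : Rabs (kappa * k * dev n rs / INR n) <= kappa * (M / INR n).
  apply: Rabs_div_le => //.
  rewrite (_ : kappa * (M / INR n) * INR n = kappa * M); last by field; lra.
  rewrite 2!Rabs_mult (Rabs_pos_eq kappa); last lra.
  have := dev_max_lt1; have := Rabs_pos k; have := Rabs_pos (dev n rs) => *.
  have : Rabs k * Rabs (dev n rs) <= M by nra.
  by nra.
have := drift_ge0 M n_gt0 => drift_ge.
have : Rabs k * drift n M <= M * drift n M by nra.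
have -> : M * drift n M =
          kappa / 2 * (M / INR n) + 1000 * (M / INR n) + 1000 * (M ^ 3 / INR n ^ 2).
  by rewrite /drift; field; lra.
have x_ge0 : 0 <= M / INR n.
  by apply: Rmult_le_pos; [have := Rabs_pos k | apply/Rlt_le/Rinv_0_lt_compat]; lra.
have : kappa * (M / INR n) <= 11.5 * (M / INR n) by apply: Rmult_le_compat_r; lra.
by move=> *; apply: Rle_trans (Rabs_triang _ _) _; rewrite Rabs_Ropp; lra.
Qed.

Lemma q_le_edges k r : (k <= rs)%nat -> (rs + k <= r)%nat || (r + k <= rs)%nat ->
  (q n r <= q n (rs + k) + q n (rs - k))%nat.
Proof.
move=> le_k_rs /orP[far_up | far_down].
  exact: leq_trans (q_le_after (leq_addr k rs) far_up) (leq_addr _ _).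
apply: leq_trans (q_le_before _ (leq_subr k rs)) (leq_addl _ _).
by rewrite leq_subRL //; rewrite addnC.
Qed.

End Maximiser.

Definition window n := sqrt (INR n * ln (INR n)) + 3.

Lemma window_sq_le n y : 1 <= y -> INR n = y ^ 8 -> window n ^ 2 <= 34 * y ^ 9.
Proof.
move=> y_ge1 nE; have y9_ge1 : 1 <= y ^ 9 by rewrite -(pow1 9); apply: pow_incr; lra.
have ln_y : 0 <= ln y <= y.
  by split; [apply: ln_ge0 | have := @ln_le_sub1 y ltac:(lra)]; lra.
have ln_n : ln (INR n) = 8 * ln y by rewrite nE ln_pow /=; [ring | lra].
have nln_ge0 : 0 <= INR n * ln (INR n) by rewrite ln_n; apply: Rmult_le_pos; [apply: pos_INR | lra].
have nln_le : INR n * ln (INR n) <= 8 * y ^ 9.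
  rewrite ln_n nE (_ : 8 * y ^ 9 = y ^ 8 * (8 * y)); last by ring.
  by apply: Rmult_le_compat_l; [apply: pow_le | ]; lra.
have := sqrt_pos (INR n * ln (INR n)); have := sqrt_sqrt _ nln_ge0.
by rewrite /window; nra.
Qed.

Lemma root8K x : 0 <= x -> sqrt (sqrt (sqrt x)) ^ 8 = x.
Proof.
move=> x_ge0; set a := sqrt x; set b := sqrt a; set c := sqrt b.
have Ea : a * a = x by apply: sqrt_sqrt.
have Eb : b * b = a by apply/sqrt_sqrt/sqrt_pos.
have Ec : c * c = b by apply/sqrt_sqrt/sqrt_pos.
by rewrite -Ea -Eb -Ec; ring.
Qed.

Lemma window_small delta : 0 < delta -> exists N, forall n, (N <= n)%nat ->
  10000 <= INR n /\ window n / INR n <= delta /\ window n ^ 3 / INR n ^ 2 <= delta.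
Proof.
(* With [n = y ^ 8], [window n ^ 2 <= 34 y ^ 9] while [n ^ 2 = y ^ 16]. *)
move=> delta_gt0; have d2_gt0 : 0 < delta ^ 2 by apply: pow_lt.
set Y := 10000 + 34 ^ 3 / delta ^ 2.
have Y_ge : 10000 <= Y.
  have : 0 <= 34 ^ 3 / delta ^ 2 by apply/Rlt_le/Rdiv_lt_0_compat; lra.
  by rewrite /Y; lra.
have dY : 34 ^ 3 <= delta ^ 2 * Y.
  have : delta ^ 2 * (34 ^ 3 / delta ^ 2) = 34 ^ 3 by field; lra.
  by rewrite /Y; nra.
have [N N_gt] := INR_unbounded (Y ^ 8).
exists N => n le_Nn; have := INR_leq le_Nn => INR_Nn.
set y := sqrt (sqrt (sqrt (INR n))); have y8 : INR n = y ^ 8 by rewrite root8K //; apply: pos_INR.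
have y_ge0 : 0 <= y by apply: sqrt_pos.
have Y_le_y : Y <= y.
  by apply: Rnot_lt_le => /Rlt_le lt_yY; have := pow_incr y Y 8 (conj y_ge0 lt_yY); lra.
have y_pow k : (1 <= k)%coq_nat -> y <= y ^ k.
  by move=> k_ge1; have := Rle_pow y 1 k ltac:(lra) k_ge1; rewrite pow_1.
have M2 := window_sq_le (ltac:(lra) : 1 <= y) y8.
have M_ge0 : 0 <= window n by rewrite /window; have := sqrt_pos (INR n * ln (INR n)); lra.
have n_gt0 : 0 < INR n by have := y_pow 8%nat ltac:(lia); lra.
split; first by have := y_pow 8%nat ltac:(lia); lra.
split; apply: div_le_of_le_mul; try (by apply: pow_lt); first lra.
- apply: Rsqr_incr_0_var; last by apply: Rmult_le_pos; lra.
  rewrite /Rsqr y8 (_ : delta * y ^ 8 * (delta * y ^ 8) = delta ^ 2 * y ^ 7 * y ^ 9).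
  + have : 34 <= delta ^ 2 * y ^ 7 by have := y_pow 7%nat ltac:(lia); nra.
    by have := pow_le y 9 y_ge0; nra.
  + by ring.
- apply: Rsqr_incr_0_var; last by apply: Rmult_le_pos; [lra | apply: pow_le; lra].
  rewrite /Rsqr y8 (_ : delta * (y ^ 8) ^ 2 * (delta * (y ^ 8) ^ 2) = delta ^ 2 * y ^ 5 * y ^ 27).
  + have -> : window n ^ 3 * window n ^ 3 = (window n ^ 2) ^ 3 by ring.
    have := pow_incr _ _ 3 (conj (pow2_ge_0 (window n)) M2).
    have -> : (34 * y ^ 9) ^ 3 = 34 ^ 3 * y ^ 27 by ring.
    have : 34 ^ 3 <= delta ^ 2 * y ^ 5 by have := y_pow 5%nat ltac:(lia); nra.
    by have := pow_le y 27 y_ge0; nra.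
  + by ring.
Qed.

Lemma Rabs_mul_sqrt_le a b c : 0 <= a -> 0 <= b -> Rabs c <= sqrt b ->
  Rabs (c * sqrt a) <= sqrt (a * b).
Proof.
move=> a_ge0 b_ge0 le_cb; rewrite Rabs_mult (Rabs_pos_eq (sqrt a)); last exact: sqrt_pos.
by rewrite sqrt_mult // Rmult_comm; apply: Rmult_le_compat_l => //; apply: sqrt_pos.
Qed.

Lemma log_q_gaussian n rs rn c delta :
  (forall r, (q n r <= q n rs)%nat) -> delta <= 1 / 100 -> 10000 <= INR n ->
  window n / INR n <= delta -> window n ^ 3 / INR n ^ 2 <= delta ->
  INR rn = INR rs + c * sqrt (INR n) -> Rabs c <= sqrt (ln (INR n)) ->
  Rabs (ln (INR (q n rn)) - ln (INR (q n rs)) + kappa * c ^ 2 / 2) <= 2020 * delta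
  /\ (0 < q n rn)%nat.
Proof.
move=> rs_max delta_small n_large M1 M3 rnE c_le.
have n_ge0 := pos_INR n; have ln_ge0 : 0 <= ln (INR n) by apply: ln_ge0; lra.
have M_small : window n <= INR n / 100.
  by have := le_mul_of_div_le (ltac:(lra) : 0 < INR n) M1; nra.
have dist : 1 + Rabs (INR rn - INR rs) <= window n.
  rewrite rnE (_ : INR rs + _ - INR rs = c * sqrt (INR n)); last by ring.
  by have := Rabs_mul_sqrt_le n_ge0 ln_ge0 c_le; rewrite /window; lra.
split; last by apply: (q_gt0_near_max (ltac:(lra) : 1 <= INR n) rs_max n_large); lra.
have := log_q_near_max (ltac:(lra) : 1 <= INR n) rs_max n_large M_small dist.
have sqE : (INR rs + c * sqrt (INR n) - INR rs) ^ 2 = c ^ 2 * INR n.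
  by rewrite -{2}(sqrt_sqrt (INR n)) //; ring.
rewrite rnE sqE (_ : kappa * (c ^ 2 * INR n) / (2 * INR n) = kappa * c ^ 2 / 2); last by field; lra.
by lra.
Qed.

Lemma q_near_max_gaussian (rstar : nat -> nat)
  (hmax : forall n r : nat, (q n r <= q n (rstar n))%nat) (eps : R) : 0 < eps ->
  exists N : nat, forall (n : nat) (r : BinNums.Z), (N <= n)%nat ->
    forall c : R, IZR r = INR (rstar n) + c * sqrt (INR n) ->
    - sqrt (ln (INR n)) <= c <= sqrt (ln (INR n)) ->
    exists e : R, Rabs e <= eps /\
      INR (qZ n r) = exp (- (5 * sqrt 5 * c ^ 2) / 2 + e) * INR (q n (rstar n)).
Proof.
move=> eps_gt0; set delta := Rmin (eps / 2020) (1 / 100).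
have delta_gt0 : 0 < delta by apply: Rmin_pos; lra.
have delta_le_eps : delta <= eps / 2020 := Rmin_l _ _.
have delta_small : delta <= 1 / 100 := Rmin_r _ _.
have [N HN] := window_small delta_gt0.
exists N => n r le_Nn c rE /Rabs_le c_le; have [n_large [M1 M3]] := HN n le_Nn.
have ln_ge0 : 0 <= ln (INR n) by apply: ln_ge0; lra.
have r_gt0 : (0 < r)%Z.
  apply: lt_IZR; rewrite rE; have xb := xstar_bounds.
  have := Rabs_le_inv (Rlt_le _ _ (dev_max_lt1 (ltac:(lra) : 1 <= INR n) (hmax n))).
  have := Rabs_le_inv (Rabs_mul_sqrt_le (pos_INR n) ln_ge0 c_le).
  have := le_mul_of_div_le (ltac:(lra) : 0 < INR n) M1.
  have : delta * INR n <= INR n / 100 by nra.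
  have : 0.27 * INR n <= INR n * xstar by nra.
  by rewrite /window /dev => *; lra.
have rnE : INR (Z.to_nat r) = IZR r by rewrite INR_IZR_INZ Znat.Z2Nat.id //; lia.
have qZE : qZ n r = q n (Z.to_nat r) by rewrite /qZ (proj2 (Z.ltb_ge _ _)) //; lia.
rewrite -rnE in rE.
have [bound q_pos] := log_q_gaussian (hmax n) delta_small n_large M1 M3 rE c_le.
rewrite qZE; set a := INR (q n (Z.to_nat r)) in bound *; set b := INR (q n (rstar n)) in bound *.
have a_gt0 : 0 < a by apply/lt_0_INR/ltP.
have b_gt0 : 0 < b by apply/lt_0_INR/ltP/q_max_gt0.
exists (ln a - ln b + kappa * c ^ 2 / 2); split; first lra.
rewrite (_ : - (5 * sqrt 5 * c ^ 2) / 2 + (ln a - ln b + kappa * c ^ 2 / 2) = ln a - ln b).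
  by rewrite /Rminus exp_plus exp_Ropp !exp_ln //; field; lra.
by rewrite /kappa /sqrt5; field.
Qed.

Lemma q_far_edge_le n rs rn : (forall r, (q n r <= q n rs)%nat) -> 10000 <= INR n ->
  window n / INR n <= 1 / 2020 -> window n ^ 3 / INR n ^ 2 <= 1 / 2020 ->
  sqrt (INR n * ln (INR n)) < Rabs (INR rn - INR rs) <= sqrt (INR n * ln (INR n)) + 1 ->
  INR (q n rn) <= INR (q n rs) * exp (- (kappa / 2) * ln (INR n) + 1).
Proof.
move=> rs_max n_large M1 M3 [far near]; have n_ge1 : 1 <= INR n by lra.
have ln_ge0 : 0 <= ln (INR n) by apply: ln_ge0.
have M_small : window n <= INR n / 100.
  by have := le_mul_of_div_le (ltac:(lra) : 0 < INR n) M1; lra.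
have dist : 1 + Rabs (INR rn - INR rs) <= window n by rewrite /window; lra.
have := log_q_near_max n_ge1 rs_max n_large M_small dist.
have qrn_gt0 : (0 < q n rn)%nat by apply: (q_gt0_near_max n_ge1 rs_max n_large); lra.
have t2E : sqrt (INR n * ln (INR n)) ^ 2 = INR n * ln (INR n).
  by rewrite /= Rmult_1_r sqrt_sqrt //; apply: Rmult_le_pos; lra.
have expo : kappa / 2 * ln (INR n) <= kappa * (INR rn - INR rs) ^ 2 / (2 * INR n).
  have := pow_incr _ _ 2 (conj (sqrt_pos _) (Rlt_le _ _ far)).
  rewrite t2E RPow_abs Rabs_pos_eq => [le_sq|]; last exact: pow2_ge_0.
  rewrite (_ : kappa / 2 * ln (INR n) = kappa * (INR n * ln (INR n)) / (2 * INR n)).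
    apply: Rmult_le_compat_r; first by apply/Rlt_le/Rinv_0_lt_compat; lra.
    by have := kappa_bounds; nra.
  by field; lra.
move=> /Rabs_le_inv bound; apply: le_mul_exp_of_ln.
- exact/lt_0_INR/ltP/qrn_gt0.
- exact/lt_0_INR/ltP/(q_max_gt0 rs_max).
- by lra.
Qed.

Lemma far_count_le_gaussian (rstar : nat -> nat)
  (hmax : forall n r : nat, (q n r <= q n (rstar n))%nat) :
  exists N : nat, forall n : nat, (N <= n)%nat ->
    INR (far_count n (rstar n) (sqrt (INR n * ln (INR n))))
      <= 4 * exp 1 * INR n * exp (- (5 * sqrt 5 / 2) * ln (INR n)) * INR (q n (rstar n)).
Proof.
have [N HN] := @window_small (1 / 2020) ltac:(lra).
exists N => n le_Nn; have [n_large [M1 M3]] := HN n le_Nn.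
have n_ge1 : 1 <= INR n by lra.
set rs := rstar n; set t := sqrt (INR n * ln (INR n)).
have t_ge0 : 0 <= t by apply: sqrt_pos.
have [up_gt up_le] := archimed t.
have up_ge0 : (0 <= up t)%Z by apply: le_IZR; lra.
set kb := Z.to_nat (up t).
have kbE : INR kb = IZR (up t) by rewrite INR_IZR_INZ Znat.Z2Nat.id.
set B := INR (q n rs) * exp (- (kappa / 2) * ln (INR n) + 1).
have edge rn : Rabs (INR rn - INR rs) = INR kb -> INR (q n rn) <= B.
  by move=> dist; apply: q_far_edge_le (hmax n) n_large M1 M3 _; rewrite -/rs -/t dist; lra.
have le_kb_rs : (kb <= rs)%nat.
  apply/leP/INR_le; have xb := xstar_bounds.
  have := Rabs_le_inv (Rlt_le _ _ (dev_max_lt1 n_ge1 (hmax n))).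
  have := le_mul_of_div_le (ltac:(lra) : 0 < INR n) M1.
  by rewrite /window /dev -/t -/rs => *; nra.
have up_edge : INR (q n (rs + kb)) <= B.
  apply: edge; rewrite plus_INR (_ : _ + _ - _ = INR kb); last by ring.
  by rewrite Rabs_pos_eq //; apply: pos_INR.
have down_edge : INR (q n (rs - kb)) <= B.
  apply: edge; rewrite minus_INR; last exact/leP.
  by rewrite (_ : _ - _ - _ = - INR kb) ?Rabs_Ropp ?Rabs_pos_eq //; [apply: pos_INR | ring].
have far_le : (far_count n rs t <= n.+1 * (q n (rs + kb) + q n (rs - kb)))%nat.
  pose far r := if Rlt_dec t (Rabs (INR r - INR rs)) then true else false.
  apply: (@card_Qset_sizes_le n far) => r _; rewrite /far; case: Rlt_dec => // far_r _.
  apply: q_le_edges => //; case: (leqP rs r) => [le_rs_r | /ltnW le_r_rs].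
  - rewrite Rabs_pos_eq in far_r; last by have := INR_leq le_rs_r; lra.
    by apply/orP; left; rewrite -ltnS; apply/ltP/INR_lt; rewrite S_INR plus_INR; lra.
  - rewrite Rabs_minus_sym Rabs_pos_eq in far_r; last by have := INR_leq le_r_rs; lra.
    by apply/orP; right; rewrite -ltnS; apply/ltP/INR_lt; rewrite S_INR plus_INR; lra.
have := INR_leq far_le; rewrite mult_INR plus_INR S_INR => far_R.
apply: Rle_trans far_R _.
have -> : 4 * exp 1 * INR n * exp (- (5 * sqrt 5 / 2) * ln (INR n)) * INR (q n rs) = 4 * INR n * B.
  by rewrite /B /kappa /sqrt5 exp_plus; ring.
have : 0 <= B by apply: Rmult_le_pos; [apply: pos_INR | apply/Rlt_le/exp_pos].
by nra.
Qed.

Lemma far_count_negligible (rstar : nat -> nat)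
  (hmax : forall n r : nat, (q n r <= q n (rstar n))%nat) (eps : R) : 0 < eps ->
  exists N : nat, forall n : nat, (N <= n)%nat ->
    INR (far_count n (rstar n) (sqrt (INR n * ln (INR n)))) <= eps * INR (q n (rstar n)).
Proof.
move=> eps_gt0; have [N1 HN1] := far_count_le_gaussian hmax.
have C_gt0 : 0 < 4 * exp 1 / eps by apply: Rdiv_lt_0_compat; [have := exp_pos 1 |]; lra.
have [N2 HN2] := INR_unbounded (4 * exp 1 / eps + 1).
exists (maxn N1 N2) => n; rewrite geq_max => /andP[le_N1n le_N2n].
have n_large := INR_leq le_N2n.
apply: Rle_trans (HN1 n le_N1n) _; apply: Rmult_le_compat_r; first exact: pos_INR.
set nn := INR n in n_large *; have nn_gt0 : 0 < nn by lra.
have decay : exp (- (5 * sqrt 5 / 2) * ln nn) <= / (nn * nn).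
  rewrite -[/ (nn * nn)]exp_ln; last by apply: Rinv_0_lt_compat; nra.
  rewrite ln_Rinv ?ln_mult //; last by nra.
  apply: exp_le_exp; have := sqrt5_bounds; have : 0 <= ln nn by apply: ln_ge0; lra.
  by rewrite /sqrt5; nra.
have : 4 * exp 1 * nn * / (nn * nn) <= eps.
  rewrite (_ : 4 * exp 1 * nn * / (nn * nn) = 4 * exp 1 / eps * eps / nn); last by field; lra.
  by apply: div_le_of_le_mul => //; nra.
have : 0 <= 4 * exp 1 * nn by have := exp_pos 1; nra.
by move=> *; apply: Rle_trans (Rmult_le_compat_l _ _ _ _ decay) _.
Qed.

Local Close Scope R_scope.

Theorem mainTheorem7 (rstar : nat -> nat)
  (hmax : forall n r : nat, (q n r <= q n (rstar n))%N) :
  (* (i) *)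
  (forall eps : R, (0 < eps)%R ->
     exists N : nat, forall (n : nat) (r : BinNums.Z), (N <= n)%N ->
       forall c : R,
         (IZR r = INR (rstar n) + c * sqrt (INR n))%R ->
         (- sqrt (ln (INR n)) <= c <= sqrt (ln (INR n)))%R ->
         exists e : R, (Rabs e <= eps)%R /\
           INR (qZ n r) =
             (exp (- (5 * sqrt 5 * c ^ 2) / 2 + e) * INR (q n (rstar n)))%R)
  /\
  (* (ii) *)
  (exists C : R, exists N : nat, forall n : nat, (N <= n)%N ->
     (INR (far_count n (rstar n) (sqrt (INR n * ln (INR n))))
        <= C * INR n * exp (- (5 * sqrt 5 / 2) * ln (INR n))
             * INR (q n (rstar n)))%R)
  /\
  (forall eps : R, (0 < eps)%R ->
     exists N : nat, forall n : nat, (N <= n)%N ->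
       (INR (far_count n (rstar n) (sqrt (INR n * ln (INR n))))
          <= eps * INR (q n (rstar n)))%R).
Proof.
split; first exact: q_near_max_gaussian hmax.
split; last exact: far_count_negligible hmax.
by exists (4 * exp 1)%R; apply: far_count_le_gaussian hmax.
Qed.
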